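(* Let $n\ge 1$ and assume all matrices $\Lambda_{k-1}$ ($0\le k\le n+1$) and all elements $H_k,\tau_k$ ($0\le k\le n+1$) below are invertible. Then the monic noncommutative Laurent biorthogonal polynomials satisfy the three-term recurrence relation $$\lambda\big(P_n(\lambda)+a_nP_{n-1}(\lambda)\big)=P_{n+1}(\lambda)+b_nP_n(\lambda),$$ where $$a_n=-\tau_n\tau_{n-1}^{-1},\qquad b_n=a_nH_{n-1}H_n^{-1}.$$
   Context: Let $R$ be a skew field containing elements $m_i$, $i\in\mathbb Z$ (the moments), and equipped with an involution $a\mapsto a^*$ (an anti-automorphism of order two). For polynomials / formal Laurent series in a commuting indeterminate $\lambda$ with coefficients in $R$, extend the involution by $(\sum_i a_i\lambda^i)^*=\sum_i a_i^*\lambda^{-i}$. Define the pairing $$\Big\langle \sum_i a_i\lambda^i,\sum_j b_j\lambda^j\Big\rangle=\sum_{i,j}a_i\,m_{i-j}\,b_j^*.$$ It is left $R$-linear in the first argument, satisfies $\langle p,\beta q\rangle=\langle p,q\rangle\beta^*$, and $\langle\lambda p,q\rangle=\langle p,\lambda^{-1}q\rangle$. For $n\ge 0$, let $\Lambda_{n-1}=(m_{i-j})_{i,j=0}^{n-1}$, an $n\times n$ matrix over $R$, assumed invertible. The empty matrix is used for $n=0$. Let $\theta_n=(m_n,m_{n-1},\dots,m_1)$ be a row vector. The monic Laurent biorthogonal polynomials are $$P_n(\lambda)=\lambda^n-\theta_n\Lambda_{n-1}^{-1}(1,\lambda,\dots,\lambda^{n-1})^T,$$ with $P_0=1$. Equivalently,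 $P_n$ is the unique monic polynomial of degree $n$ with $\langle P_n,\lambda^j\rangle=0$ for $0\le j\le n-1$. The companion family $Q_n$ consists of monic polynomials of degree $n$ with $$\langle P_n,Q_m\rangle=H_n\delta_{nm}.$$ Here $$H_n=m_0-\theta_n\Lambda_{n-1}^{-1}(m_{-n},m_{-n+1},\dots,m_{-1})^T,$$ so that $H_0=m_0$, and $$\tau_n=m_{n+1}-\theta_n\Lambda_{n-1}^{-1}(m_1,m_2,\dots,m_n)^T,$$ so that $\tau_0=m_1$. (These are the quasideterminants of the corresponding bordered $(n+1)\times(n+1)$ moment matrices with boxed bottom-right entry; in particular $\tau_n=\langle P_n,\lambda^{-1}\rangle$.) *)

From HB Require Import structures.
From mathcomp Require Import all_boot all_order all_algebra.
Set Implicit Arguments. Unset Strict Implicit. Unset Printing Implicit Defensive.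
Import Order.TTheory GRing.Theory Num.Theory.
Local Open Scope ring_scope.

(* R : unitRingType (possibly noncommutative); moments m : int -> R.
   Linv k is (a two-sided inverse of) Lambda_{k-1}, a k x k matrix. *)
Section LBP.
Variable R : unitRingType.
Variable m : int -> R.
Variable Linv : forall k : nat, 'M[R]_k.

Definition Lambda (n : nat) : 'M[R]_n := \matrix_(i < n, j < n) m (i%:Z - j%:Z).

Definition theta (n : nat) : 'rV[R]_n := \row_(j < n) m (n%:Z - j%:Z).

Definition coefrow (n : nat) : 'rV[R]_n := theta n *m Linv n.

Definition colH (n : nat) : 'cV[R]_n := \col_(i < n) m (i%:Z - n%:Z).
Definition colT (n : nat) : 'cV[R]_n := \col_(i < n) m (i%:Z + 1).

Definition Hn (n : nat) : R := m 0 - (coefrow n *m colH n) 0 0.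
Definition taun (n : nat) : R := m (n%:Z + 1) - (coefrow n *m colT n) 0 0.

Definition Pn (n : nat) : {poly R} :=
  'X^n - \sum_(j < n) (coefrow n 0 j)%:P * 'X^j.
End LBP.

Definition is_inverse_mx (R : pzRingType) (k : nat) (A B : 'M[R]_k) : Prop :=
  A *m B = 1%:M /\ B *m A = 1%:M.

From HB Require Import structures.
From mathcomp Require Import all_boot all_order all_algebra.
From mathcomp Require Import zify.
Import GRing.Theory.
Local Open Scope ring_scope.
Set Implicit Arguments. Unset Strict Implicit.

(* Let D := lambda (P_n + a P_(n-1)) - (P_(n+1) + b P_n).  The leading terms
   cancel, so deg D <= n + 1, and D is determined by its pairings
   <D, lambda^k>, 0 <= k <= n + 1, since Lambda_(n+1) is invertible.
   Multiplying by lambda shifts k by one, so biorthogonality kills all these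
   pairings except two: at k = 0 what remains is tau_n + a tau_(n-1), and at
   k = n + 1 it is a H_(n-1) - b H_n; the coefficients a and b are chosen to
   make both vanish. *)

Section MomentPairing.
Variables (R : unitRingType) (m : int -> R).
Implicit Types p : {poly R}.

(* [pairing N k p] is <p, lambda^k>, reading only the first N coefficients
   of p. *)
Definition pairing (N : nat) (k : int) (p : {poly R}) : R :=
  \sum_(i < N) p`_i * m (i%:Z - k).

Lemma pairing_is_scalar N k : scalar (pairing N k).
Proof.
move=> c p q; rewrite /pairing mulr_sumr -big_split /=; apply: eq_bigr => i _.
by rewrite coefD coefZ mulrDl mulrA.
Qed.
HB.instance Definition _ N k :=
  GRing.isLinear.Build R {poly R} R *%R (pairing N k) (pairing_is_scalar N k).

Lemma pairingCM N k c p : pairing N k (c%:P * p) = c * pairing N k p.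
Proof. by rewrite mul_polyC linearZ. Qed.

Lemma pairing_combination N k p q c :
  pairing N k (p + c%:P * q) = pairing N k p + c * pairing N k q.
Proof. by rewrite linearD /= pairingCM. Qed.

Lemma pairingXn N k j : (j < N)%N -> pairing N k 'X^j = m (j%:Z - k).
Proof.
move=> ltjN; rewrite /pairing (bigD1 (Ordinal ltjN)) //= coefXn eqxx mul1r.
rewrite big1 ?addr0 // => i /eqP neq_ij; rewrite coefXn.
by case: eqP => [eq_ij|]; [case: neq_ij; apply: val_inj | rewrite mul0r].
Qed.

Lemma pairingXM N k p : pairing N.+1 k ('X * p) = pairing N (k - 1) p.
Proof.
rewrite /pairing big_ord_recl coefXM mul0r add0r.
apply: eq_bigr => i _; rewrite coefXM /= add0n.
by congr (_ * m _); rewrite /bump /=; lia.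
Qed.

Lemma pairing_sizeS N k p : (size p <= N)%N -> pairing N.+1 k p = pairing N k p.
Proof.
by move=> le_pN; rewrite /pairing big_ord_recr /= (nth_default _ le_pN) mul0r addr0.
Qed.

Lemma pairing_Lambda N p (k : 'I_N) :
  pairing N k p = (poly_rV p *m Lambda m N) 0 k.
Proof. by rewrite mxE; apply: eq_bigr => i _; rewrite !mxE. Qed.

Lemma pairing_eq0 N (B : 'M[R]_N) p :
  Lambda m N *m B = 1%:M -> (size p <= N)%N ->
  (forall k : 'I_N, pairing N k p = 0) -> p = 0.
Proof.
move=> LB1 le_pN p_orth.
have rV_p0 : poly_rV p *m Lambda m N = 0.
  by apply/rowP => k; rewrite -pairing_Lambda p_orth mxE.
rewrite -(poly_rV_K le_pN) -[poly_rV p]mulmx1 -LB1 mulmxA rV_p0 mul0mx.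
exact: linear0.
Qed.

End MomentPairing.

Section BiorthogonalPolynomials.
Variables (R : unitRingType) (m : int -> R) (Linv : forall k : nat, 'M[R]_k).

Local Notation P := (Pn m Linv).

Lemma pairing_Pn N j k : (j < N)%N ->
  pairing m N k (P j)
    = m (j%:Z - k) - \sum_(i < j) coefrow m Linv j 0 i * m (i%:Z - k).
Proof.
move=> ltjN; rewrite /Pn linearB /= pairingXn // linear_sum /=; congr (_ - _).
by apply: eq_bigr => i _; rewrite pairingCM pairingXn // (ltn_trans (ltn_ord i)).
Qed.

Lemma pairing_Pn_lt N j (k : nat) : Linv j *m Lambda m j = 1%:M ->
  (k < j < N)%N -> pairing m N k (P j) = 0.
Proof.
move=> LinvL /andP[ltkj ltjN].
have := congr1 (fun M : 'rV_j => M 0 (Ordinal ltkj)) (mulmx1 (theta m j)).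
rewrite -LinvL mulmxA -/(coefrow m Linv j) !mxE => /= theta_k.
rewrite pairing_Pn // -theta_k; apply/eqP; rewrite subr_eq0; apply/eqP.
by apply: eq_bigr => i _; rewrite !mxE.
Qed.

Lemma pairing_Pn_diag N j : (j < N)%N -> pairing m N j (P j) = Hn m Linv j.
Proof.
move=> ltjN; rewrite pairing_Pn // /Hn subrr mxE; congr (_ - _).
by apply: eq_bigr => i _; rewrite !mxE.
Qed.

Lemma pairing_Pn_inv N j : (j < N)%N -> pairing m N (-1) (P j) = taun m Linv j.
Proof.
move=> ltjN; rewrite pairing_Pn // /taun mxE; congr (_ - _).
by apply: eq_bigr => i _; rewrite !mxE.
Qed.

Lemma coef_Pn_ge j i : (j <= i)%N -> (P j)`_i = (i == j)%:R.
Proof.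
move=> leji; rewrite /Pn coefB coefXn coef_sum big1 ?subr0 // => l _.
by rewrite coefCM coefXn gtn_eqF ?mulr0 // (leq_trans (ltn_ord l)).
Qed.

Definition recurrence_defect (j : nat) (a b : R) : {poly R} :=
  'X * (P j.+1 + a%:P * P j) - (P j.+2 + b%:P * P j.+1).

Lemma size_recurrence_defect j a b : (size (recurrence_defect j a b) <= j.+2)%N.
Proof.
apply/leq_sizeP => -[//|i]; rewrite ltnS => lt_ji.
rewrite coefB coefXM /= !(coefD (Pn m Linv _)) !coefCM.
rewrite !coef_Pn_ge ?ltnS ?(ltnW lt_ji) // !eqSS (gtn_eqF lt_ji).
by rewrite !mulr0 !addr0 subrr.
Qed.

Lemma pairing_recurrence_defect j a b (k : nat) :
  (forall i, (i <= j.+2)%N -> Linv i *m Lambda m i = 1%:M) ->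
  taun m Linv j.+1 + a * taun m Linv j = 0 ->
  a * Hn m Linv j = b * Hn m Linv j.+1 ->
  (k < j.+2)%N -> pairing m j.+2 k (recurrence_defect j a b) = 0.
Proof.
move=> LinvL a_tau b_H ltkj.
have P_lt N i l :
    (l < i)%N -> (i <= j.+2)%N -> (i < N)%N -> pairing m N l (P i) = 0.
  by move=> ltli leij ltiN; apply: pairing_Pn_lt (LinvL i leij) _; rewrite ltli.
rewrite -pairing_sizeS ?size_recurrence_defect // /recurrence_defect.
rewrite linearB /= pairingXM !pairing_combination.
case: k ltkj => [_|k].
  by rewrite sub0r !pairing_Pn_inv // !P_lt ?leqnSn // a_tau mulr0 addr0 subrr.
have -> : k.+1%:Z - 1 = k by rewrite -addn1 PoszD addrK.
rewrite !ltnS leq_eqVlt => /predU1P[->|ltkj].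
  by rewrite !pairing_Pn_diag // !P_lt ?leqnSn // !add0r b_H subrr.
by rewrite !P_lt ?mulr0 ?addr0 ?subrr //; lia.
Qed.

End BiorthogonalPolynomials.

Theorem proposition1
  (R : unitRingType)
  (hskew : forall x : R, x != 0 -> x \is a GRing.unit)
  (star : R -> R)
  (star_add : forall x y : R, star (x + y) = star x + star y)
  (star_mul : forall x y : R, star (x * y) = star y * star x)
  (star_one : star 1 = 1)
  (star_inv : forall x : R, star (star x) = x)
  (m : int -> R)
  (Linv : forall k : nat, 'M[R]_k)
  (n : nat) (hn : (1 <= n)%N)
  (hL : forall k : nat, (k <= n.+1)%N -> is_inverse_mx (Lambda m k) (Linv k))
  (hH : forall k : nat, (k <= n.+1)%N -> Hn m Linv k \is a GRing.unit)
  (hT : forall k : nat, (k <= n.+1)%N -> taun m Linv k \is a GRing.unit) :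
  let a := - (taun m Linv n * (taun m Linv n.-1)^-1) in
  let b := a * Hn m Linv n.-1 * (Hn m Linv n)^-1 in
  'X * (Pn m Linv n + a%:P * Pn m Linv n.-1)
    = Pn m Linv n.+1 + b%:P * Pn m Linv n.
Proof.
case: n hn hL hH hT => [//|n] _ hL hH hT a b.
have a_tau : taun m Linv n.+1 + a * taun m Linv n = 0.
  by rewrite /a mulNr mulrVK ?subrr //; apply: hT; lia.
have b_H : a * Hn m Linv n = b * Hn m Linv n.+1.
  by rewrite /b mulrVK //; apply: hH.
apply/eqP; rewrite -subr_eq0; apply/eqP.
apply: (pairing_eq0 (B := Linv n.+2)) (size_recurrence_defect _ _ _ _ _) _.
  exact: (hL _ (leqnn _)).1.
by move=> k; apply: pairing_recurrence_defect => // i /hL[].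
Qed.
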